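(* Let $g_1,\dots,g_r\in\mathbb R[X_1,\dots,X_n]$ satisfy $1-\|\mathbf X\|_2^2\in\mathcal Q(\mathbf g)$ and $\|g_i\|\le\tfrac12$, with $S=\mathcal S(\mathbf g)\neq\emptyset$. Let $\mathfrak c,\textit{Ł}>0$ be such that $D(x)^{\textit{Ł}}\le\mathfrak c\,G(x)$ for all $x\in[-1,1]^n$. Let $f\in\mathbb R[\mathbf X]$ of degree $d$ with $f^*=\min_Sf>0$, and assume there exists $x\in[-1,1]^n\setminus S$ with $f(x)\le0$. Let $A=\{x\in[-1,1]^n: f(x)\le\frac{3f^*}4\}$. Then for all $x\in A$, $$G(x)\ge\delta:=\frac1{\mathfrak c}\Big(\frac{\epsilon(f)}{8d^2}\Big)^{\textit{Ł}}.$$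
   Context: $\Sigma^2$ sums of squares, $\mathcal S(\mathbf g)=\{x:g_i(x)\ge0\ \forall i\}$, $\mathcal Q(\mathbf g)=\Sigma^2+\sum_i\Sigma^2g_i$, $\|h\|=\max_{[-1,1]^n}|h|$, $\epsilon(f)=f^*/\|f\|$, $G(x)=|\min\{g_1(x),\dots,g_r(x),0\}|$, $D(x)=\operatorname{dist}(x,S)$ (Euclidean), both on $[-1,1]^n$. *)

From mathcomp Require Import all_boot all_order all_algebra.
From mathcomp Require Import boolp classical_sets reals exp.
From mathcomp Require Export mpoly.
Set Implicit Arguments. Unset Strict Implicit. Unset Printing Implicit Defensive.
Import Order.TTheory GRing.Theory Num.Theory.
Local Open Scope ring_scope.
Local Open Scope classical_set_scope.

Section Defs.
Variables (R : realType) (n : nat).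

Definition is_sos (p : {mpoly R[n]}) : Prop :=
  exists s : seq {mpoly R[n]}, p = \sum_(q <- s) q ^+ 2.

Definition in_qmodule (r : nat) (g : 'I_r -> {mpoly R[n]}) (p : {mpoly R[n]}) : Prop :=
  exists (s0 : {mpoly R[n]}) (s : 'I_r -> {mpoly R[n]}),
    [/\ is_sos s0, (forall i, is_sos (s i)) & p = s0 + \sum_(i < r) s i * g i].

Definition in_cube (x : 'I_n -> R) : Prop := forall i, -1 <= x i <= 1.

Definition in_S (r : nat) (g : 'I_r -> {mpoly R[n]}) (x : 'I_n -> R) : Prop :=
  forall i, 0 <= (g i).@[x].

Definition supnorm (h : {mpoly R[n]}) : R :=
  sup [set `|h.@[x]| | x in in_cube].

Definition fmin (r : nat) (g : 'I_r -> {mpoly R[n]}) (f : {mpoly R[n]}) : R :=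
  inf [set f.@[x] | x in in_S g].

Definition eps_f (r : nat) (g : 'I_r -> {mpoly R[n]}) (f : {mpoly R[n]}) : R :=
  fmin g f / supnorm f.

Definition Gfun (r : nat) (g : 'I_r -> {mpoly R[n]}) (x : 'I_n -> R) : R :=
  `| \big[Num.min/0]_(i < r) (g i).@[x] |.

Definition eucl_dist (x y : 'I_n -> R) : R :=
  Num.sqrt (\sum_(i < n) (x i - y i) ^+ 2).

Definition Dfun (r : nat) (g : 'I_r -> {mpoly R[n]}) (x : 'I_n -> R) : R :=
  inf [set eucl_dist x y | y in in_S g].

End Defs.

(* Restricted to a segment of the cube [-1, 1]^n, f is a univariate polynomial
   of degree at most d, so Markov's inequality |p'| <= d^2 max |p| makes f
   Lipschitz on the cube with constant 2 d^2 ||f||.  Markov's inequality at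
   the endpoint 1 follows from Lagrange interpolation at the extrema
   cos (j pi / d) of the Chebyshev polynomial T_d: the weights expressing p'(1)
   through the values p(x_j) alternate in sign, so their absolute values sum
   to T_d'(1) = d^2.
   The certificate 1 - |X|^2 in Q(g) puts S in the unit ball, hence in the
   cube.  If f(x) <= 3 f^*/4 and y is in S, then f^*/4 <= f(y) - f(x)
   <= 2 d^2 ||f|| |x - y|, so D(x) >= epsilon(f) / (8 d^2), and the
   Lojasiewicz inequality D^L <= c G turns this into the bound on G(x). *)
From mathcomp Require Import all_boot all_order all_algebra.
From mathcomp Require Import boolp reals exp trigo.
From mathcomp Require Import mpoly polyrcf.
From mathcomp Require Import ring lra zify.
Import Order.TTheory GRing.Theory Num.Theory.
Local Open Scope ring_scope.
Set Implicit Arguments. Unset Strict Implicit. Unset Printing Implicit Defensive.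

Lemma nat_ind2 (P : nat -> Prop) :
  P 0%N -> P 1%N -> (forall k, P k -> P k.+1 -> P k.+2) -> forall k, P k.
Proof.
move=> P0 P1 PS k; suff [] : P k /\ P k.+1 by [].
by elim: k => [|k [Pk Pk1]]; split=> //; apply: PS.
Qed.

Section Chebyshev.
Variable R : realType.

Fixpoint cheb_pair (k : nat) : {poly R} * {poly R} :=
  if k is k'.+1 then
    let: (p, q) := cheb_pair k' in (q, 2%:P * 'X * q - p)
  else (1, 'X).

Definition cheb (k : nat) : {poly R} := (cheb_pair k).1.

Lemma cheb0 : cheb 0 = 1. Proof. by []. Qed.
Lemma cheb1 : cheb 1 = 'X. Proof. by []. Qed.

Lemma chebSS k : cheb k.+2 = 2%:P * 'X * cheb k.+1 - cheb k.
Proof. by rewrite /cheb /=; case: (cheb_pair k). Qed.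

Lemma horner_cheb_cos k t : (cheb k).[cos t] = cos (k%:R * t).
Proof.
elim/nat_ind2: k => [||k IHk IHk1]; first by rewrite cheb0 hornerC mul0r cos0.
  by rewrite cheb1 hornerX mul1r.
rewrite chebSS !hornerE IHk IHk1.
have -> : k.+2%:R * t = k.+1%:R * t + t by rewrite -addn1 natrD; ring.
have -> : k%:R * t = k.+1%:R * t - t by rewrite -addn1 natrD; ring.
by rewrite !cosD cosN sinN; ring.
Qed.

Lemma size_cheb k : (size (cheb k) <= k.+1)%N.
Proof.
elim/nat_ind2: k => [||k IHk IHk1]; first by rewrite cheb0 size_poly1.
  by rewrite cheb1 size_polyX.
rewrite chebSS; apply: (leq_trans (size_polyD _ _)); rewrite geq_max size_polyN.
apply/andP; split; last exact: leq_trans IHk (leqW (leqnSn _)).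
rewrite -mulrA mul_polyC (leq_trans (size_scale_leq _ _)) //.
by rewrite (leq_trans (size_polyMleq _ _)) // size_polyX.
Qed.

Lemma horner_cheb1 k : (cheb k).[1] = 1.
Proof. by rewrite -cos0 horner_cheb_cos mulr0 cos0. Qed.

Lemma deriv_cheb1 k : (cheb k)^`().[1] = k%:R ^+ 2.
Proof.
elim/nat_ind2: k => [||k IHk IHk1]; first by rewrite cheb0 derivC horner0 expr0n.
  by rewrite cheb1 derivX hornerC expr1n.
rewrite chebSS !derivE !hornerE IHk IHk1 !horner_cheb1.
by rewrite -[k.+2]addn2 -[k.+1]addn1 !natrD; ring.
Qed.

Variable d : nat.
Hypothesis d_gt0 : (0 < d)%N.

(* Beyond [d] the nodes continue by an arbitrary decreasing tail, because
   [lagrange] from qpoly asks for nodes that are injective on all of nat. *)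
Definition cheb_node (j : nat) : R :=
  if (j <= d)%N then cos (j%:R * (pi : R) / d%:R) else - j%:R - 1.

Lemma cheb_node_arg j : (j <= d)%N -> j%:R * pi / d%:R \in `[0, (pi : R)].
Proof.
move=> jd; have d_pos : 0 < d%:R :> R by rewrite ltr0n.
rewrite in_itv /= divr_ge0 ?mulr_ge0 ?pi_ge0 ?(ltW d_pos) //=.
by rewrite ler_pdivrMr // mulrC ler_pM2l ?pi_gt0 // ler_nat.
Qed.

Lemma cheb_node_decr i j : (i < j)%N -> cheb_node j < cheb_node i.
Proof.
move=> ij; rewrite /cheb_node; have [jd|dj] := leqP j d.
  rewrite (leq_trans (ltnW ij) jd) ltr_cos ?cheb_node_arg ?(leq_trans (ltnW ij)) //.
  by rewrite ltr_pM2r ?invr_gt0 ?ltr0n // ltr_pM2r ?pi_gt0 // ltr_nat.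
have tail_lt : - j%:R - 1 < -1 :> R.
  by rewrite ltrBlDr addrC subrr oppr_lt0 ltr0n (leq_trans _ dj).
case: leqP => _; first exact: lt_le_trans tail_lt (cos_geN1 _).
by rewrite ltrD2r ltrN2 ltr_nat.
Qed.

Lemma cheb_node_bound j : (j <= d)%N -> -1 <= cheb_node j <= 1.
Proof. by move=> jd; rewrite /cheb_node jd cos_geN1 cos_le1. Qed.

Lemma horner_cheb_node j : (j <= d)%N -> (cheb d).[cheb_node j] = (-1) ^+ j.
Proof.
move=> jd; rewrite /cheb_node jd horner_cheb_cos.
have -> : d%:R * (j%:R * pi / d%:R) = j%:R * pi :> R.
  by field; rewrite pnatr_eq0 -lt0n.
elim: j {jd} => [|j IHj]; first by rewrite mul0r cos0.
by rewrite -natr1 mulrDl mul1r cosDpi IHj exprSr mulrN1.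
Qed.

End Chebyshev.

Lemma deriv_prod_XsubC_ge0 (R : realDomainType) (I : Type) (r : seq I)
    (P : pred I) (a : I -> R) t :
  (forall j, P j -> a j <= t) ->
  0 <= (\prod_(j <- r | P j) ('X - (a j)%:P))^`().[t].
Proof.
move=> a_le; elim: r => [|j r IHr]; first by rewrite big_nil derivC horner0.
rewrite big_cons; case: ifP => // Pj.
rewrite derivM !hornerE addr_ge0 ?mulr_ge0 ?subr_ge0 ?a_le //.
  by rewrite derivXsubC hornerC.
by rewrite horner_prod prodr_ge0 // => k Pk; rewrite hornerXsubC subr_ge0 a_le.
Qed.

Section AlternatingNodes.
Variables (R : realFieldType) (d : nat) (x : nat -> R).
Hypothesis x_decr : forall i j, (i < j)%N -> x j < x i.
Hypothesis x0_le1 : x 0 <= 1.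

Let x_inj : injective x.
Proof.
by move=> i j xij; case: (ltngtP i j) => // ij; have := x_decr ij; rewrite xij ltxx.
Qed.

Let x_le1 j : x j <= 1.
Proof. by case: j => // j; rewrite (le_trans _ x0_le1) // ltW // x_decr. Qed.

Lemma node_gaps_sign (i : 'I_d.+1) :
  0 < (-1) ^+ i * \prod_(j < d.+1 | j != i) (x i - x j).
Proof.
have -> : \prod_(j < d.+1 | j != i) (x i - x j) =
    \prod_(j < d.+1 | (j < i)%N) (x i - x j) * \prod_(j < d.+1 | (i < j)%N) (x i - x j).
  rewrite (bigID (fun j : 'I_d.+1 => (j < i)%N)) /=; congr (_ * _); apply: eq_bigl => j.
    by rewrite andb_idl // => ji; apply: contraTneq ji => ->; rewrite ltnn.
  by rewrite -leqNgt ltn_neqAle eq_sym.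
have -> : (-1) ^+ i = \prod_(j < i) (-1) :> R by rewrite prodr_const card_ord.
rewrite (big_ord_widen d.+1 (fun=> -1) (ltnW (ltn_ord i))) mulrA -big_split /=.
rewrite mulr_gt0 // prodr_gt0 // => j ij.
  by rewrite mulN1r opprB subr_gt0 x_decr.
by rewrite subr_gt0 x_decr.
Qed.

Let weight (i : 'I_d.+1) : R := (tnth (lagrange d.+1 x) i : {poly R})^`().[1].

Let deriv1_lagrange (p : {poly R}) :
  (size p <= d.+1)%N -> p^`().[1] = \sum_(i < d.+1) p.[x i] * weight i.
Proof.
move=> sp; rewrite {1}(lagrange_gen (ltn0Sn d) x_inj sp) raddf_sum horner_sum.
by apply: eq_bigr => i _; rewrite /= mul_polyC derivZ hornerZ.
Qed.

Let weight_sign (i : 'I_d.+1) : 0 <= (-1) ^+ i * weight i.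
Proof.
rewrite /weight lagrangeE //= mul_polyC derivZ hornerZ mulrA mulr_ge0 //.
  rewrite horner_prod -{1}invrN1 exprVn -invfM invr_ge0 ltW //.
  by under eq_bigr do rewrite hornerXsubC; exact: node_gaps_sign.
by rewrite deriv_prod_XsubC_ge0 // => j _; exact: x_le1.
Qed.

Lemma markov_alternating (T p : {poly R}) (M : R) :
  (size T <= d.+1)%N -> (forall j, (j <= d)%N -> T.[x j] = (-1) ^+ j) ->
  (size p <= d.+1)%N -> (forall j, (j <= d)%N -> `|p.[x j]| <= M) ->
  `|p^`().[1]| <= T^`().[1] * M.
Proof.
move=> sT T_alt sp p_le; rewrite !deriv1_lagrange // mulr_suml.
apply: (le_trans (ler_norm_sum _ _ _)); apply: ler_sum => i _.
have norm_weight : `|weight i| = (-1) ^+ i * weight i.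
  by rewrite -(ger0_norm (weight_sign i)) normrM normrX normrN1 expr1n mul1r.
by rewrite T_alt ?leq_ord // normrM mulrC norm_weight ler_wpM2l ?p_le ?leq_ord.
Qed.

End AlternatingNodes.

Section Markov.
Variable R : realType.

Lemma markov_at1 (d : nat) (p : {poly R}) (M : R) :
  (size p <= d.+1)%N -> (forall t, -1 <= t <= 1 -> `|p.[t]| <= M) ->
  `|p^`().[1]| <= d%:R ^+ 2 * M.
Proof.
move=> sp p_le; have [d0|d_gt0] := posnP d.
  move: sp; rewrite d0 => /size1_polyC ->.
  by rewrite derivC horner0 normr0 expr0n mul0r.
rewrite -(deriv_cheb1 R d); apply: (markov_alternating (d := d) (x := cheb_node R d)) => //.
- exact: cheb_node_decr.
- by rewrite /cheb_node leq0n !mul0r cos0.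
- exact: size_cheb.
- exact: horner_cheb_node.
- by move=> j jd; apply: p_le; exact (cheb_node_bound R jd).
Qed.

Lemma markov01_at0 (d : nat) (q : {poly R}) (M : R) :
  (size q <= d.+1)%N -> (forall s, 0 <= s <= 1 -> `|q.[s]| <= M) ->
  `|q^`().[0]| <= 2 * d%:R ^+ 2 * M.
Proof.
move=> sq q_le.
(* t = 1 - 2 s maps [0, 1] onto [-1, 1] and 0 to 1, at the cost of a factor 2
   in the derivative. *)
pose r : {poly R} := - 2^-1 *: ('X - 1%:P).
have r_val t : r.[t] = (1 - t) / 2 by rewrite /r hornerZ hornerXsubC; field.
have r_deriv : r^`() = (- 2^-1)%:P by rewrite /r derivZ derivXsubC alg_polyC.
have size_qr : (size (q \Po r) <= d.+1)%N.
  have size_r : (size r <= 2)%N by rewrite (leq_trans (size_scale_leq _ _)) ?size_XsubC.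
  rewrite (leq_trans (size_comp_poly_leq _ _)) //.
  by move: (size q) (size r) sq size_r => a b; nia.
have := markov_at1 size_qr (M := M) _.
rewrite deriv_comp r_deriv hornerM horner_comp hornerC r_val subrr mul0r normrM.
rewrite normrN normfV normr_nat => bound.
suff : `|q^`().[0]| * 2^-1 <= d%:R ^+ 2 * M by lra.
apply: bound => t /andP[t_ge t_le]; rewrite horner_comp r_val.
by apply: q_le; apply/andP; split; lra.
Qed.
End Markov.

Lemma size_prod_leq (R : nzSemiRingType) (I : Type) (r : seq I)
    (F : I -> {poly R}) :
  ((size (\prod_(i <- r) F i)%R).-1 <= \sum_(i <- r) (size (F i)).-1)%N.
Proof.
elim: r => [|i r IHr]; first by rewrite !big_nil size_poly1.
by rewrite !big_cons; move: (size_polyMleq (F i) (\prod_(j <- r) F j)) IHr; lia.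
Qed.

Section LineRestriction.
Variables (R : comNzRingType) (n : nat).
Implicit Types (f g : {mpoly R[n]}) (z v w : 'I_n -> R).

Definition line_poly z v f : {poly R} :=
  mmap (@polyC R) (fun i => (z i)%:P + (v i)%:P * 'X) f.

Definition dir_deriv f w v : R := \sum_(i < n) v i * (f^`M(i)).@[w].

Lemma horner_line_poly z v f t : (line_poly z v f).[t] = f.@[fun i => z i + t * v i].
Proof.
rewrite /line_poly /mmap horner_sum mevalE; apply: eq_bigr => m _.
rewrite hornerM hornerC /mmap1 horner_prod; congr (_ * _); apply: eq_bigr => i _.
by rewrite horner_exp !hornerE mulrC.
Qed.

Lemma size_line_poly z v f : (size (line_poly z v f) <= msize f)%N.
Proof.
rewrite /line_poly /mmap (leq_trans (size_sum _ _ _)) //.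
apply/bigmax_leqP_seq => m m_supp _.
rewrite mul_polyC (leq_trans (size_scale_leq _ _)) //.
rewrite (leq_trans (leqSpred _)) // (leq_ltn_trans _ (msize_mdeg_lt m_supp)) //.
rewrite mdegE /mmap1; apply: leq_trans (size_prod_leq _ _) _; apply: leq_sum => i _.
have size_line : (size ((z i)%:P + (v i)%:P * 'X)%R <= 2)%N.
  rewrite (leq_trans (size_polyD _ _)) // geq_max (leq_trans (size_polyC_leq1 _)) //=.
  by rewrite mul_polyC (leq_trans (size_scale_leq _ _)) ?size_polyX.
rewrite -subn1 leq_subLR add1n (leq_trans (size_poly_exp_leq _ _)) // ltnS.
by rewrite -[X in (_ <= X)%N]mul1n leq_mul2r -subn1 leq_subLR size_line orbT.
Qed.

Lemma line_polyD z v : {morph line_poly z v : f g / f + g}.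
Proof. exact: mmapD. Qed.

Lemma line_polyM z v : {morph line_poly z v : f g / f * g}.
Proof. exact: rmorphM. Qed.

Lemma line_polyC z v c : line_poly z v c%:MP = c%:P.
Proof. exact: mmapC. Qed.

Lemma line_polyX z v i : line_poly z v 'X_i = (z i)%:P + (v i)%:P * 'X.
Proof. by rewrite /line_poly mmapX mmap1U. Qed.

Section Derivative.
Variables z v : 'I_n -> R.
Local Notation L := (line_poly z v).

(* The defect satisfies Leibniz' rule and vanishes on constants and on the
   variables, hence everywhere. *)
Let defect f := (L f)^`() - \sum_(i < n) (v i)%:P * L (f^`M(i)).

Let defectD f g : defect (f + g) = defect f + defect g.
Proof.
rewrite /defect; have -> : \sum_(i < n) (v i)%:P * L ((f + g)^`M(i)) =
    \sum_(i < n) (v i)%:P * L (f^`M(i)) + \sum_(i < n) (v i)%:P * L (g^`M(i)).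
  by rewrite -big_split; apply: eq_bigr => i _; rewrite mderivD line_polyD mulrDr.
by rewrite line_polyD derivD opprD addrACA.
Qed.

Let defectM f g : defect (f * g) = defect f * L g + L f * defect g.
Proof.
rewrite /defect; have -> : \sum_(i < n) (v i)%:P * L ((f * g)^`M(i)) =
    (\sum_(i < n) (v i)%:P * L (f^`M(i))) * L g + L f * \sum_(i < n) (v i)%:P * L (g^`M(i)).
  rewrite mulr_suml mulr_sumr -big_split; apply: eq_bigr => i _.
  by rewrite mderivM line_polyD !line_polyM mulrDr !mulrA [_ * L f]mulrC.
by rewrite line_polyM derivM; ring.
Qed.

Let defectC c : defect c%:MP = 0.
Proof.
rewrite /defect line_polyC derivC big1 ?subrr // => i _.
by rewrite mderivC line_polyC mulr0.
Qed.

Let defectX i : defect 'X_i = 0.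
Proof.
rewrite /defect line_polyX derivD derivC add0r derivM derivC derivX mul0r add0r mulr1.
rewrite (bigD1 i) //= big1 ?addr0 => [|j ji].
  rewrite mderivX mnm1E eqxx -[X in (X - _)%MM]add0m addmK.
  by rewrite mpolyX0 scale1r -mpolyC1 line_polyC mulr1 subrr.
by rewrite mderivX mnm1E eq_sym (negPf ji) scale0r -mpolyC0 line_polyC mulr0.
Qed.

Lemma deriv_line_poly f : (L f)^`() = \sum_(i < n) (v i)%:P * L (f^`M(i)).
Proof.
suff : defect f = 0 by move/eqP; rewrite subr_eq0 => /eqP.
rewrite (mpolyE f); elim/big_rec: _ => [|m q _ IHq]; first by rewrite -mpolyC0 defectC.
rewrite defectD IHq addr0 -mul_mpolyC defectM defectC mul0r add0r mpolyXE_id.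
suff -> : defect (\prod_(i < n) 'X_i ^+ m i) = 0 by rewrite mulr0.
elim/big_rec: _ => [|i p _ IHp]; first by rewrite -mpolyC1 defectC.
rewrite defectM IHp mulr0 addr0.
suff -> : defect ('X_i ^+ m i) = 0 by rewrite mul0r.
elim: (m i) => [|k IHk]; first by rewrite expr0 -mpolyC1 defectC.
by rewrite exprS defectM IHk defectX mulr0 mul0r addr0.
Qed.

End Derivative.

Lemma horner_deriv_line_poly z v f t :
  (line_poly z v f)^`().[t] = dir_deriv f (fun i => z i + t * v i) v.
Proof.
rewrite deriv_line_poly horner_sum; apply: eq_bigr => i _.
by rewrite hornerM hornerC horner_line_poly.
Qed.

End LineRestriction.

Section Cube.
Variables (R : realType) (n : nat).
Implicit Types (u w z : 'I_n -> R).

Lemma sqr_le_sum_sqr u i : u i ^+ 2 <= \sum_j u j ^+ 2.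
Proof. by rewrite (bigD1 i) //= lerDl sumr_ge0 // => j _; rewrite sqr_ge0. Qed.

Lemma unit_ball_in_cube u : \sum_i u i ^+ 2 <= 1 -> in_cube u.
Proof.
move=> u_le i; have ui_le := le_trans (sqr_le_sum_sqr u i) u_le.
by apply/andP; split; nra.
Qed.

Lemma in_cube_segment z w s : in_cube z -> in_cube w -> 0 <= s <= 1 ->
  in_cube (fun i => z i + s * (w i - z i)).
Proof.
move=> z_cube w_cube /andP[s_ge0 s_le1] i.
by have /andP[? ?] := z_cube i; have /andP[? ?] := w_cube i; apply/andP; split; nra.
Qed.

End Cube.

Section CubeLipschitz.
Variables (R : realType) (n : nat) (f : {mpoly R[n]}) (d : nat) (M : R).
Hypothesis size_f : (msize f <= d.+1)%N.
Hypothesis f_le : forall y, in_cube y -> `|f.@[y]| <= M.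

Lemma dir_deriv_toward_le z w : in_cube z -> in_cube w ->
  `|dir_deriv f z (fun i => w i - z i)| <= 2 * d%:R ^+ 2 * M.
Proof.
move=> z_cube w_cube; set v := fun i => w i - z i.
have -> : z = (fun i => z i + 0 * v i) by apply/funext => i; rewrite mul0r addr0.
rewrite -horner_deriv_line_poly; apply: markov01_at0.
  exact: leq_trans (size_line_poly _ _ _) size_f.
by move=> s s01; rewrite horner_line_poly; apply/f_le/in_cube_segment.
Qed.

(* u and -u lie in the cube, and twice the derivative along u is the
   difference of the derivatives along the segments from z to u and to -u. *)
Lemma dir_deriv_unit_le z u : in_cube z -> \sum_i u i ^+ 2 <= 1 ->
  `|dir_deriv f z u| <= 2 * d%:R ^+ 2 * M.
Proof.
move=> z_cube u_le; have u_cube := unit_ball_in_cube u_le.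
have Nu_cube : in_cube (fun i => - u i).
  by apply: unit_ball_in_cube; under eq_bigr do rewrite sqrrN.
have two_deriv : 2 * dir_deriv f z u =
    dir_deriv f z (fun i => u i - z i) - dir_deriv f z (fun i => - u i - z i).
  by rewrite /dir_deriv -sumrB mulr_sumr; apply: eq_bigr => i _; ring.
have := ler_normB (dir_deriv f z (fun i => u i - z i))
  (dir_deriv f z (fun i => - u i - z i)).
rewrite -two_deriv normrM normr_nat.
have := dir_deriv_toward_le z_cube u_cube; have := dir_deriv_toward_le z_cube Nu_cube.
lra.
Qed.

Lemma dir_deriv_le z v : in_cube z ->
  `|dir_deriv f z v| <= 2 * d%:R ^+ 2 * M * Num.sqrt (\sum_i v i ^+ 2).
Proof.
move=> z_cube; have sum_ge0 : 0 <= \sum_i v i ^+ 2.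
  by rewrite sumr_ge0 // => i; rewrite sqr_ge0.
set N := Num.sqrt _; have [N_gt0|] := ltrP 0 N; last first.
  rewrite le_eqVlt ltNge sqrtr_ge0 orbF sqrtr_eq0 => sum_le0.
  have sum0 : \sum_i v i ^+ 2 = 0 by apply/le_anti/andP.
  have v0 i : v i = 0.
    by apply/eqP; rewrite -sqrf_eq0 (psumr_eq0P _ sum0) // => j _; rewrite sqr_ge0.
  rewrite /N (ler0_sqrtr sum_le0) mulr0 /dir_deriv big1 ?normr0 // => i _.
  by rewrite v0 mul0r.
have -> : dir_deriv f z v = N * dir_deriv f z (fun i => v i / N).
  by rewrite /dir_deriv mulr_sumr; apply: eq_bigr => i _; field; rewrite gt_eqF.
rewrite normrM gtr0_norm // mulrC ler_pM2r // dir_deriv_unit_le //.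
under eq_bigr do rewrite expr_div_n.
by rewrite -mulr_suml sqr_sqrtr // divff // gt_eqF // -sqrtr_gt0.
Qed.

Lemma lipschitz_on_cube x y : in_cube x -> in_cube y ->
  f.@[y] - f.@[x] <= 2 * d%:R ^+ 2 * M * eucl_dist x y.
Proof.
move=> x_cube y_cube; set v := fun i => y i - x i.
have [c] := poly_mvt (line_poly x v f) (@ltr01 R).
rewrite in_itv /= => /andP[c_gt0 c_lt1].
rewrite !horner_line_poly horner_deriv_line_poly subr0 mulr1.
have -> : (fun i => x i + 1 * v i) = y by apply/funext => i; rewrite mul1r addrC subrK.
have -> : (fun i => x i + 0 * v i) = x by apply/funext => i; rewrite mul0r addr0.
move=> ->; apply: le_trans (ler_norm _) _.
have cube_c : in_cube (fun i => x i + c * v i) by apply: in_cube_segment; rewrite ?ltW.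
apply: le_trans (dir_deriv_le _ cube_c) _; rewrite /eucl_dist.
by under eq_bigr do rewrite -sqrrN opprB.
Qed.

End CubeLipschitz.

Section SemialgebraicSet.
Variables (R : realType) (n : nat).
Implicit Types (f p : {mpoly R[n]}) (x y : 'I_n -> R).

Lemma norm_meval_le_coef_sum f y :
  in_cube y -> `|f.@[y]| <= \sum_(m <- msupp f) `|f@_m|.
Proof.
move=> y_cube; rewrite mevalE (le_trans (ler_norm_sum _ _ _)) // ler_sum // => m _.
rewrite normrM ler_piMr // normr_prod prodr_ile1 // => i _.
by rewrite normrX exprn_ge0 ?exprn_ile1 ?normr_ge0 // ler_norml y_cube.
Qed.

Lemma norm_meval_le_supnorm f y : in_cube y -> `|f.@[y]| <= supnorm f.
Proof.
move=> y_cube; apply: sup_upper_bound; last by exists y.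
split; first by exists `|f.@[y]|, y.
exists (\sum_(m <- msupp f) `|f@_m|) => _ [z z_cube <-].
exact: norm_meval_le_coef_sum.
Qed.

Lemma supnorm_ge0 f : 0 <= supnorm f.
Proof.
have zero_cube : in_cube (fun _ : 'I_n => 0 : R) by move=> i; rewrite lerN10 ler01.
exact: le_trans (normr_ge0 _) (norm_meval_le_supnorm f zero_cube).
Qed.

Lemma sos_meval_ge0 p y : is_sos p -> 0 <= p.@[y].
Proof.
by move=> [s ->]; rewrite raddf_sum sumr_ge0 // => q _; rewrite /= rmorphXn sqr_ge0.
Qed.

Variables (r : nat) (g : 'I_r -> {mpoly R[n]}).

Lemma qmodule_meval_ge0 p y : in_qmodule g p -> in_S g y -> 0 <= p.@[y].
Proof.
move=> [s0 [s [s0_sos s_sos ->]]] y_S.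
rewrite mevalD raddf_sum /= addr_ge0 ?sos_meval_ge0 //.
by rewrite sumr_ge0 // => i _; rewrite mevalM mulr_ge0 ?y_S ?sos_meval_ge0 ?s_sos.
Qed.

Hypothesis ball_certificate : in_qmodule g (1 - \sum_(i < n) 'X_i ^+ 2).

Lemma in_S_in_cube y : in_S g y -> in_cube y.
Proof.
move=> y_S; apply: unit_ball_in_cube; rewrite -subr_ge0.
have := qmodule_meval_ge0 ball_certificate y_S.
rewrite mevalB meval1 (raddf_sum (meval y)) /= (eq_bigr (fun i => y i ^+ 2)) // => i _.
by rewrite rmorphXn /= mevalXU.
Qed.

Lemma fmin_le_meval f y : in_S g y -> fmin g f <= f.@[y].
Proof.
move=> y_S; apply: ge_inf; last by exists y.
exists (- \sum_(m <- msupp f) `|f@_m|) => _ [z z_S <-].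
by have := norm_meval_le_coef_sum f (in_S_in_cube z_S); rewrite ler_norml => /andP[].
Qed.

Lemma sublevel_dist_ge f x y : 0 < fmin g f -> in_cube x ->
  f.@[x] <= 3 / 4 * fmin g f -> in_S g y ->
  eps_f g f / (8 * (msize f).-1%:R ^+ 2) <= eucl_dist x y.
Proof.
move=> fmin_gt0 x_cube fx_le y_S; set D := (msize f).-1.
have dist_ge0 : 0 <= eucl_dist x y by exact: sqrtr_ge0.
(* For D = 0 the bound is eps_f g f / 0 = 0. *)
have [D0|D_gt0] := posnP D; first by rewrite D0 mulr0n expr0n mulr0 invr0 mulr0.
set M := supnorm f; have M_gt0 : 0 < M.
  rewrite (lt_le_trans fmin_gt0) // (le_trans (fmin_le_meval f y_S)) //.
  exact: le_trans (ler_norm _) (norm_meval_le_supnorm _ (in_S_in_cube y_S)).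
have := lipschitz_on_cube (leqSpred _) (@norm_meval_le_supnorm f) x_cube (in_S_in_cube y_S).
have := fmin_le_meval f y_S; rewrite /eps_f -/M -/D => fmin_le lip.
have denom_gt0 : 0 < M * (8 * D%:R ^+ 2) by rewrite mulr_gt0 // mulr_gt0 // exprn_gt0 // ltr0n.
by rewrite -mulrA -invfM ler_pdivrMr //; lra.
Qed.

End SemialgebraicSet.

Theorem mainTheorem9 (R : realType) (n r : nat) (g : 'I_r -> {mpoly R[n]})
  (c L : R) (f : {mpoly R[n]}) (d : nat) :
  in_qmodule g (1 - \sum_(i < n) 'X_i ^+ 2) ->
  (forall i, supnorm (g i) <= 1 / 2) ->
  (exists x, in_S g x) ->
  0 < c -> 0 < L ->
  (forall x, in_cube x -> Dfun g x `^ L <= c * Gfun g x) ->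
  (msize f).-1 = d ->
  0 < fmin g f ->
  (exists x, [/\ in_cube x, ~ in_S g x & f.@[x] <= 0]) ->
  forall x, in_cube x -> f.@[x] <= 3 / 4 * fmin g f ->
    Gfun g x >= 1 / c * (eps_f g f / (8 * (d%:R) ^+ 2)) `^ L.
Proof.
move=> ball_cert _ [y0 y0_S] c_gt0 L_gt0 D_le_G <- fmin_gt0 _ x x_cube fx_le.
set delta := eps_f g f / _.
have delta_ge0 : 0 <= delta.
  by rewrite /delta /eps_f !divr_ge0 ?supnorm_ge0 ?(ltW fmin_gt0) ?mulr_ge0 ?sqr_ge0.
have delta_le_D : delta <= Dfun g x.
  apply: lb_le_inf; first by exists (eucl_dist x y0), y0.
  by move=> _ [y y_S <-]; exact: sublevel_dist_ge.
have pow_le : delta `^ L <= Dfun g x `^ L.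
  apply: ge0_ler_powR => //; first exact: ltW.
  by rewrite nnegrE (le_trans delta_ge0).
rewrite div1r ler_pdivrMl //.
exact: le_trans pow_le (D_le_G x x_cube).
Qed.
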